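(* Let $n\ge w\ge t\ge 1$ and $q,q'\ge 1$ be integers. Let $S\subset Q_{q*}^n$ be an $H(n,q,w,t)$ design and let $R\subset Q_{q'*}^w$ be an $H(w,q',w,t)$ design (i.e. an MDS code of length $w$ over $Q_{q'}$ in which every word of weight $t$ in $Q_{q'*}^w$ is extended by exactly one codeword). For each pair consisting of a codeword $a\in S$, whose non-$*$ entries in increasing order of position are $a^1,\dots,a^w$, and a codeword $(b_1,\dots,b_w)\in R$, form the word in $(Q_q\times Q_{q'})_*^n$ which has $*$ exactly where $a$ has $*$, and whose $j$-th non-$*$ entry (in increasing order of position) is the pair $(a^j,b_j)$, $j=1,\dots,w$. Identifying $Q_q\times Q_{q'}$ with $Q_{qq'}$, let $T\subset Q_{qq'*}^n$ be the set of all such words. Then $T$ is an $H(n,qq',w,t)$ design.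
   Context: For an integer $q\ge1$, $Q_q=\{0,1,\dots,q-1\}$ and $Q_{q*}=Q_q\cup\{*\}$ (for any finite alphabet $A$, $A_*=A\cup\{*\}$). The weight of a word $u\in Q_{q*}^n$ is $n$ minus the number of $*$ symbols in $u$. For $u,v\in Q_{q*}^n$ we say $u$ extends $v$ if $u_i=v_i$ for every position $i$ with $v_i\neq *$ (equivalently, viewing $u$ as the face $F(u)=\{x\in Q_q^n: x_i=u_i \text{ whenever } u_i\ne *\}$ of the hypercube $Q_q^n$, $F(u)\subseteq F(v)$). An $H(n,q,w,t)$ design is a set $S$ of words of weight $w$ in $Q_{q*}^n$ such that every word of weight $t$ in $Q_{q*}^n$ is extended by exactly one element of $S$. *)

From mathcomp Require Import all_boot.
Set Implicit Arguments. Unset Strict Implicit. Unset Printing Implicit Defensive.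

(* A word of length n over Q_{q*}: None plays the role of '*'. *)
Definition word (n q : nat) := {ffun 'I_n -> option 'I_q}.

Definition weight n q (u : word n q) : nat := #|[set i | u i != None]|.

Definition extends n q (u v : word n q) : Prop :=
  forall i, v i != None -> u i = v i.

Definition is_design n q w t (S : {set word n q}) : Prop :=
  (forall s, s \in S -> weight s = w) /\
  (forall v : word n q, weight v = t ->
     exists! s, s \in S /\ extends s v).

(* identification of Q_q x Q_q' with Q_{qq'} : (x,y) |-> x*q' + y *)
Lemma pair_code_subproof q q' (x : 'I_q) (y : 'I_q') : x * q' + y < q * q'.
Proof.
case: x => x /= Hx; case: y => y /= Hy.
apply: (@leq_trans (x * q' + q')); first by rewrite ltn_add2l.
by rewrite -mulSnr leq_mul2r Hx orbT.
Qed.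

Definition pair_code q q' (x : 'I_q) (y : 'I_q') : 'I_(q * q') :=
  Ordinal (pair_code_subproof x y).

Definition supp_rank n q (a : word n q) (i : 'I_n) : nat :=
  #|[set k : 'I_n | (a k != None) && (k < i)]|.

(* the j-th (0-based) entry of b, or * if out of range *)
Definition entry w q' (b : word w q') (r : nat) : option 'I_q' :=
  match @insub nat (fun r => r < w) 'I_w r with
  | Some j => b j
  | None => None
  end.

Definition combine n q w q' (a : word n q) (b : word w q') : word n (q * q') :=
  [ffun i => match a i, entry b (supp_rank a i) with
             | Some x, Some y => Some (pair_code x y)
             | _, _ => None
             end].

Definition product_design n q w q' (S : {set word n q}) (R : {set word w q'})
  : {set word n (q * q')} :=
  [set combine a b | a in S, b in R].

From mathcomp Require Import all_boot.
Set Implicit Arguments. Unset Strict Implicit. Unset Printing Implicit Defensive.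

(* A word [v] of weight [t] over [Q_q x Q_q'] splits into its first
   coordinates, a word of weight [t] over [Q_q], and, once a codeword [a] of
   [S] is fixed, its second coordinates moved along the rank map that sends
   the support of [a] bijectively onto [{0, ..., w-1}], a word of weight [t]
   over [Q_q'].  The combined word of [a] and a codeword [b] of [R] extends
   [v] exactly when [a] extends the first part and [b] the second, so the
   unique extensions in [S] and [R] give the unique extension in [T]. *)

Section PairDecoding.
Variables (q q' : nat) (q_gt0 : 0 < q) (q'_gt0 : 0 < q').

Definition pair_fst (z : 'I_(q * q')) : 'I_q := insubd (Ordinal q_gt0) (z %/ q').
Definition pair_snd (z : 'I_(q * q')) : 'I_q' := insubd (Ordinal q'_gt0) (z %% q').

Lemma pair_fst_code x y : pair_fst (pair_code x y) = x.
Proof.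
apply: val_inj; rewrite /pair_fst val_insubd /=.
by rewrite divnMDl // divn_small ?ltn_ord // addn0 ltn_ord.
Qed.

Lemma pair_snd_code x y : pair_snd (pair_code x y) = y.
Proof. by apply: val_inj; rewrite /pair_snd val_insubd /= modnMDl modn_small ?ltn_ord. Qed.

Lemma pair_code_fst_snd z : pair_code (pair_fst z) (pair_snd z) = z.
Proof.
apply: val_inj; rewrite /= !val_insubd ltn_divLR // ltn_pmod // ltn_ord.
by rewrite -divn_eq.
Qed.

End PairDecoding.

Lemma supp_rank_lt_weight n q (a : word n q) i :
  a i != None -> supp_rank a i < weight a.
Proof.
move=> ai; apply: proper_card; apply/properP; split.
- by apply/subsetP => k; rewrite !inE => /andP[].
- by exists i; rewrite !inE ?ai ?ltnn.
Qed.

Lemma supp_rank_ltn n q (a : word n q) (i k : 'I_n) :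
  a i != None -> i < k -> supp_rank a i < supp_rank a k.
Proof.
move=> ai lt_ik; apply: proper_card; apply/properP; split.
- by apply/subsetP => k'; rewrite !inE => /andP[-> /ltn_trans->].
- by exists i; rewrite !inE ?ai ?ltnn ?andbF.
Qed.

Lemma supp_rank_inj n q (a : word n q) (i k : 'I_n) :
  a i != None -> a k != None -> supp_rank a i = supp_rank a k -> i = k.
Proof.
move=> ai ak eq_rk; case: (ltngtP i k) => [lt_ik|lt_ki|/val_inj //].
- by have := supp_rank_ltn ai lt_ik; rewrite eq_rk ltnn.
- by have := supp_rank_ltn ak lt_ki; rewrite eq_rk ltnn.
Qed.

Lemma full_weight_neq_None w q (b : word w q) j : weight b = w -> b j != None.
Proof.
rewrite /weight => bw; suff: j \in [set i | b i != None] by rewrite inE.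
have/eqP-> : [set i | b i != None] == setT.
  by rewrite eqEcard subsetT cardsT card_ord /= (eq_leq (esym bw)).
exact: in_setT.
Qed.

Section RankMap.
Variables (n q w : nat) (w_gt0 : 0 < w) (a : word n q).
Hypothesis a_weight : weight a = w.

(* Outside the support of [a] the value is irrelevant. *)
Definition rank_map (i : 'I_n) : 'I_w := insubd (Ordinal w_gt0) (supp_rank a i).

Lemma supp_rank_lt i : a i != None -> supp_rank a i < w.
Proof. by rewrite -a_weight; apply: supp_rank_lt_weight. Qed.

Lemma val_rank_map i : a i != None -> val (rank_map i) = supp_rank a i.
Proof. by move=> /supp_rank_lt lt_rk; rewrite val_insubd lt_rk. Qed.

Lemma rank_map_inj i k :
  a i != None -> a k != None -> rank_map i = rank_map k -> i = k.
Proof. by move=> ai ak /(congr1 val); rewrite !val_rank_map //; apply: supp_rank_inj. Qed.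

Lemma combineE q' (b : word w q') i :
  combine a b i = if a i is Some x then
                    if b (rank_map i) is Some y then Some (pair_code x y) else None
                  else None.
Proof.
rewrite ffunE; case ai: (a i) => [x|] //.
have supp_i : a i != None by rewrite ai.
rewrite /entry; case: insubP => [j _ val_j | ]; last by rewrite supp_rank_lt.
by have -> : j = rank_map i by apply: val_inj; rewrite val_j val_rank_map.
Qed.

Lemma combine_neq_None q' (b : word w q') i :
  weight b = w -> (combine a b i != None) = (a i != None).
Proof.
move=> bw; rewrite combineE; case: (a i) => // x.
by have := full_weight_neq_None (rank_map i) bw; case: (b _).
Qed.

Lemma weight_combine q' (b : word w q') : weight b = w -> weight (combine a b) = w.
Proof.
move=> bw; apply: etrans a_weight; apply: eq_card => i.
by rewrite !inE combine_neq_None.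
Qed.

End RankMap.

Section Projections.
Variables (n q q' w : nat) (q_gt0 : 0 < q) (q'_gt0 : 0 < q') (w_gt0 : 0 < w).
Variable a : word n q.
Hypothesis a_weight : weight a = w.

Definition word_fst (v : word n (q * q')) : word n q :=
  [ffun i => omap (pair_fst q_gt0) (v i)].

(* The second coordinates of [v], moved to the ranks of their positions in the
   support of [a]; meaningful when the support of [v] lies in that of [a]. *)
Definition word_snd (v : word n (q * q')) : word w q' :=
  [ffun j => if [pick i | (v i != None) && (rank_map w_gt0 a i == j)] is Some i
             then omap (pair_snd q'_gt0) (v i) else None].

Lemma weight_word_fst (v : word n (q * q')) : weight (word_fst v) = weight v.
Proof. by apply: eq_card => i; rewrite !inE ffunE; case: (v i). Qed.

Lemma word_snd_rank_map (v : word n (q * q')) i :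
  (forall k, v k != None -> a k != None) -> v i != None ->
  word_snd v (rank_map w_gt0 a i) = omap (pair_snd q'_gt0) (v i).
Proof.
move=> v_supp vi; rewrite ffunE; case: pickP => [k /andP[vk /eqP eq_rk] | /(_ i)].
- by rewrite (rank_map_inj a_weight (v_supp _ vk) (v_supp _ vi) eq_rk).
- by rewrite vi eqxx.
Qed.

Lemma word_snd_neq_None (v : word n (q * q')) j :
  word_snd v j != None -> exists2 i, v i != None & j = rank_map w_gt0 a i.
Proof.
by rewrite ffunE; case: pickP => [k /andP[vk /eqP <-] _ | _]; first exists k.
Qed.

Lemma weight_word_snd (v : word n (q * q')) :
  (forall k, v k != None -> a k != None) -> weight (word_snd v) = weight v.
Proof.
move=> v_supp; rewrite /weight.
have -> : [set j | word_snd v j != None] = rank_map w_gt0 a @: [set i | v i != None].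
  apply/setP => j; rewrite inE; apply/idP/imsetP.
  - by move/word_snd_neq_None => [i vi ->]; exists i; rewrite ?inE.
  - by move=> [i]; rewrite inE => vi ->; rewrite word_snd_rank_map //; case: (v i) vi.
rewrite card_in_imset // => i k; rewrite !inE => vi vk.
exact: (rank_map_inj a_weight (v_supp _ vi) (v_supp _ vk)).
Qed.

Lemma extends_word_fst_supp (v : word n (q * q')) :
  extends a (word_fst v) -> forall i, v i != None -> a i != None.
Proof.
move=> a_ext i vi; have fst_vi : word_fst v i != None by rewrite ffunE; case: (v i) vi.
by rewrite a_ext.
Qed.

Lemma combine_extendsP (b : word w q') (v : word n (q * q')) :
  weight b = w ->
  extends (combine a b) v <-> extends a (word_fst v) /\ extends b (word_snd v).
Proof.
move=> b_weight; split => [ab_ext | [a_ext b_ext] i].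
- have v_supp k : v k != None -> a k != None.
    by move=> vk; rewrite -(combine_neq_None w_gt0 a_weight _ b_weight) ab_ext.
  split=> [i | j /[dup] /word_snd_neq_None [i vi ->]].
  + rewrite ffunE; case vi: (v i) => [z|] //= _.
    move: (ab_ext i); rewrite vi (combineE w_gt0 a_weight) => /(_ isT).
    by case: (a i) => // x; case: (b _) => // y [<-]; rewrite pair_fst_code.
  + rewrite word_snd_rank_map //; case vi': (v i) vi => [z|] // _ _.
    move: (ab_ext i); rewrite vi' (combineE w_gt0 a_weight) => /(_ isT).
    by case: (a i) => // x; case: (b _) => // y [<-] /=; rewrite pair_snd_code.
- case vi: (v i) => [z|] // _.
  have v_supp := extends_word_fst_supp a_ext.
  have vi' : v i != None by rewrite vi.
  rewrite (combineE w_gt0 a_weight) a_ext ?ffunE ?vi //= b_ext.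
  + by rewrite word_snd_rank_map // vi /= pair_code_fst_snd.
  + by rewrite word_snd_rank_map // vi.
Qed.

End Projections.

Theorem proposition1 (n w t q q' : nat)
  (S : {set word n q}) (R : {set word w q'}) :
  1 <= t -> t <= w -> w <= n -> 1 <= q -> 1 <= q' ->
  is_design w t S -> is_design w t R ->
  is_design w t (product_design S R).
Proof.
move=> t_gt0 le_tw _ q_gt0 q'_gt0 [S_weight S_uniq] [R_weight R_uniq].
have w_gt0 := leq_trans t_gt0 le_tw.
split=> [_ /imset2P[a b aS bR ->] | v v_weight].
  exact: (weight_combine w_gt0 (S_weight a aS) (R_weight b bR)).
have [a [[aS a_ext] a_uniq]] := S_uniq _ (etrans (weight_word_fst q_gt0 v) v_weight).
have a_weight := S_weight a aS.
have v_supp := extends_word_fst_supp a_ext.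
have [b [[bR b_ext] b_uniq]] :=
  R_uniq _ (etrans (weight_word_snd q'_gt0 w_gt0 a_weight v_supp) v_weight).
have ab_ext := combine_extendsP q_gt0 q'_gt0 w_gt0 a_weight v (R_weight b bR).
exists (combine a b); split=> [|_ [/imset2P[a' b' a'S b'R ->]]].
  by split; [apply: imset2_f | apply/ab_ext].
move/(combine_extendsP q_gt0 q'_gt0 w_gt0 (S_weight a' a'S) v (R_weight b' b'R)).
move=> [a'_ext b'_ext]; have eq_a : a = a' by apply: a_uniq.
by subst a'; rewrite (b_uniq b').
Qed.
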